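(* Let $\epsilon>0$ and let $D$ be a properly totally coloured digraph on at least $2\epsilon^{-2}$ vertices with rainbow vertex set. Let $v\in V(D)$ and let $\delta^+=\min\{d^+(x): d^{\mathrm{rb}}(v,x)\leq\epsilon^{-1}\}$. Then there is a set $N\subseteq V(D)$ such that $d^{\mathrm{rb}}(v,u)\leq\epsilon^{-1}$ for every $u\in N$ and $\delta^+(D[N])\geq\delta^+-2\epsilon|D|$.
   Context: Digraphs are finite, without loops and without multiple edges (an edge may appear in both directions). A path is a sequence of distinct vertices with consecutive vertices joined by directed edges; its length is its number of edges. A total colouring assigns colours to vertices and edges; it is proper if outgoing edges at any vertex have distinct colours, ingoing edges at any vertex have distinct colours, adjacent vertices have distinct colours, and every edge has a colour different from both its endpoints. $D$ has rainbow vertex set if all vertices have distinct colours. A path is rainbow if all its vertices and edges have pairwise distinct colours. $d^{\mathrm{rb}}(u,x)$ is the length of a shortest rainbow path from $u$ to $x$. $d^+(x)$ is the out-degree of $x$, $D[N]$ the induced subdigraph, $\delta^+$ the minimum out-degree, $|D|$ the number of vertices. *)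

From HB Require Import structures.
From mathcomp Require Import all_boot all_order all_algebra.
Set Implicit Arguments. Unset Strict Implicit. Unset Printing Implicit Defensive.
Import Order.TTheory GRing.Theory Num.Theory.
Local Open Scope ring_scope.

(* A digraph on a finite vertex type V is an edge relation
   e : rel V (no multiple edges automatically; edges may go both ways).
   A total colouring is a vertex colouring cv and an edge colouring ce
   (ce x y is the colour of the edge x -> y; only meaningful when e x y). *)

Section Digraph.
Variables (V : finType) (C : eqType) (e : rel V) (cv : V -> C) (ce : V -> V -> C).

Definition loopless : Prop := forall x, ~~ e x x.

Definition proper_total_colouring : Prop :=
  [/\ (forall x y z, e x y -> e x z -> y != z -> ce x y != ce x z),
      (forall x y z, e y x -> e z x -> y != z -> ce y x != ce z x),
      (forall x y, e x y -> cv x != cv y)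
    & (forall x y, e x y -> (ce x y != cv x) && (ce x y != cv y))].

Definition rainbow_vertex_set : Prop := injective cv.

(* u :: p is a rainbow path from u to x; its length is size p *)
Definition rainbow_path (u x : V) (p : seq V) : Prop :=
  [/\ path e u p, last u p = x, uniq (u :: p)
    & uniq (map cv (u :: p) ++ pairmap ce u p)].

Definition outdeg (x : V) : nat := #|[set y | e x y]|.

Definition outdeg_in (N : {set V}) (x : V) : nat := #|[set y in N | e x y]|.
End Digraph.

Definition rb_dist_le (R : realFieldType) (V : finType) (C : eqType) (e : rel V)
  (cv : V -> C) (ce : V -> V -> C) (u x : V) (k : R) : Prop :=
  exists p : seq V, rainbow_path e cv ce u x p /\ (size p)%:R <= k.

Definition min_outdeg_ball (R : realFieldType) (V : finType) (C : eqType) (e : rel V)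
  (cv : V -> C) (ce : V -> V -> C) (v : V) (k : R) (d : nat) : Prop :=
  (exists x, rb_dist_le e cv ce v x k /\ outdeg e x = d) /\
  (forall x, rb_dist_le e cv ce v x k -> (d <= outdeg e x)%N).

(* Let B_i be the set of vertices reached from v by a rainbow path of length
   at most i.  If x is reached by such a path P of length at most i, an
   out-neighbour y of x lies in B_(i+1) unless the colour of y occurs on an
   edge of P or the colour of xy occurs on P (off x); by properness of the
   colouring and injectivity of the vertex colouring at most 3i out-neighbours
   are lost this way.  So inside B_i every x keeps at least
   d+(x) - |B_(i+1) \ B_i| - 3i out-neighbours.  The shells B_(i+1) \ B_i are
   disjoint, so averaging over i < m = floor(1/eps) + 1 yields a radius with
   |B_(i+1) \ B_i| + 3i <= n/m + 3(m-1)/2 <= 2 eps n, as n >= 2/eps^2. *)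

From HB Require Import structures.
From mathcomp Require Import all_boot all_order all_algebra.
From mathcomp Require Import zify lra.
From mathcomp Require boolp.
Import Order.TTheory GRing.Theory Num.Theory.
Set Implicit Arguments. Unset Strict Implicit. Unset Printing Implicit Defensive.

Lemma card_mem_seq_injective (T : finType) (C : eqType) (P : pred T) (f : T -> C)
    (cs : seq C) :
  {in P &, injective f} -> (#|[set y | P y && (f y \in cs)]| <= size cs)%N.
Proof.
move=> f_inj; rewrite cardE -(size_map f); apply: uniq_leq_size.
  rewrite map_inj_in_uniq ?enum_uniq // => y z.
  by rewrite !mem_enum !inE => /andP [Py _] /andP [Pz _]; apply: f_inj.
by move=> c /mapP [y]; rewrite mem_enum inE => /andP [_ fy] ->.
Qed.

Lemma outdeg_in_le_setD (V : finType) (e : rel V) (N N' : {set V}) x :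
  (outdeg_in e N' x <= outdeg_in e N x + #|N' :\: N|)%N.
Proof.
apply: leq_trans (leq_card_setU _ _).1; apply: subset_leq_card.
by apply/subsetP => y; rewrite !inE; case: (y \in N); case: (y \in N'); case: (e x y).
Qed.

Lemma exists_le_average (m : nat) (f : nat -> nat) : (0 < m)%N ->
  exists2 i, (i < m)%N & (m * f i <= \sum_(0 <= j < m) f j)%N.
Proof.
move=> m_gt0; have [i _ min_i] := arg_minnP (fun j : 'I_m => f j) (isT : predT (Ordinal m_gt0)).
exists i => //; rewrite big_mkord -[m in (m * _)%N]card_ord -sum_nat_const.
by apply: leq_sum => j _; apply: min_i.
Qed.

Section RainbowBall.
Variables (V : finType) (C : eqType) (e : rel V) (cv : V -> C) (ce : V -> V -> C).

Lemma rainbow_path_prefix u x p y : rainbow_path e cv ce u x p -> y \in u :: p ->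
  exists2 q, rainbow_path e cv ce u y q & (size q <= size p)%N.
Proof.
move=> [pathp _ uniqp uniqc]; rewrite in_cons => /predU1P [-> | yp].
  by exists [::].
case/path.splitP: yp pathp uniqp uniqc => p1 p2.
rewrite -!cat_cons cat_path => /andP [pathp1 _] uniqp uniqc.
exists (rcons p1 y); last by rewrite size_cat leq_addr.
split; rewrite ?last_rcons //.
  by move: uniqp; rewrite cat_uniq => /andP [].
move: uniqc; rewrite map_cat pairmap_cat; apply: subseq_uniq.
by apply: cat_subseq; apply: prefix_subseq.
Qed.

Hypotheses (col_proper : proper_total_colouring e cv ce) (cv_inj : rainbow_vertex_set cv).

Lemma rainbow_path_rcons u x p y : rainbow_path e cv ce u x p -> e x y ->
  y \notin u :: p -> cv y \notin pairmap ce u p ->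
  ce x y \notin map cv (belast u p) ++ pairmap ce u p ->
  rainbow_path e cv ce u y (rcons p y).
Proof.
move=> [pathp lastp uniqp uniqc] exy yNp cvyNc cexyNc.
have [_ _ _ /(_ _ _ exy) /andP [cexy_x cexy_y]] := col_proper.
split; rewrite ?last_rcons -?rcons_cons ?rcons_uniq ?yNp // ?rcons_path ?pathp ?lastp //.
have -> : pairmap ce u (rcons p y) = rcons (pairmap ce u p) (ce x y).
  by rewrite -cats1 pairmap_cat /= lastp cats1.
have cvyNv : cv y \notin map cv (u :: p) by rewrite (mem_map cv_inj).
have cexyNv : ce x y \notin map cv (u :: p).
  rewrite lastI lastp map_rcons mem_rcons in_cons negb_or cexy_x /=.
  by apply: contra cexyNc; rewrite mem_cat => ->.
have cexyNc' : ce x y \notin pairmap ce u p.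
  by apply: contra cexyNc; rewrite mem_cat orbC => ->.
rewrite map_rcons; move: uniqc cvyNv cvyNc cexyNv cexyNc'.
set A := map cv (u :: p); set B := pairmap ce u p => uniqc cvyNv cvyNc cexyNv cexyNc'.
clearbody A B.
rewrite -!cats1 -catA uniq_catCA cons_uniq catA uniq_catC cons_uniq.
rewrite !mem_cat !negb_or cvyNv cvyNc cexyNv cexyNc' eq_sym cexy_y.
by rewrite uniqc.
Qed.

Definition rb_ball (u : V) (i : nat) : {set V} :=
  [set x | boolp.asbool (exists2 p, rainbow_path e cv ce u x p & (size p <= i)%N)].

Lemma rb_ballP u i x :
  reflect (exists2 p, rainbow_path e cv ce u x p & (size p <= i)%N) (x \in rb_ball u i).
Proof. by rewrite inE; apply: boolp.asboolP. Qed.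

Lemma center_rb_ball u i : u \in rb_ball u i.
Proof. by apply/rb_ballP; exists [::]. Qed.

Lemma rb_ball_subset u i j : (i <= j)%N -> rb_ball u i \subset rb_ball u j.
Proof.
move=> le_ij; apply/subsetP => x /rb_ballP [p rbp le_pi].
by apply/rb_ballP; exists p; last exact: leq_trans le_ij.
Qed.

Lemma sum_card_rb_shells u m :
  (\sum_(0 <= i < m) #|rb_ball u i.+1 :\: rb_ball u i| <= #|rb_ball u m|)%N.
Proof.
elim: m => [|m IHm]; first by rewrite big_nil.
rewrite big_nat_recr //= cardsD (setIidPr (rb_ball_subset u (leqnSn m))).
have := subset_leq_card (rb_ball_subset u (leqnSn m)); lia.
Qed.

Lemma rb_ball_out_neighbour u i x p y :
  rainbow_path e cv ce u x p -> (size p <= i)%N -> e x y ->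
  [|| y \in rb_ball u i.+1, cv y \in pairmap ce u p
    | ce x y \in map cv (belast u p) ++ pairmap ce u p].
Proof.
move=> rbp le_pi exy; apply/norP => -[/negP yNball /norP [cvyNc cexyNc]].
apply: yNball; apply/rb_ballP.
have [/(rainbow_path_prefix rbp) [q rbq le_qp] | yNp] := boolP (y \in u :: p).
  by exists q; last exact: leqW (leq_trans le_qp le_pi).
exists (rcons p y); last by rewrite size_rcons ltnS.
exact: rainbow_path_rcons rbp exy yNp cvyNc cexyNc.
Qed.

Lemma outdeg_le_rb_ball u i x : x \in rb_ball u i ->
  (outdeg e x <= outdeg_in e (rb_ball u i.+1) x + 3 * i)%N.
Proof.
case/rb_ballP => p rbp le_pi.
set cs1 := pairmap ce u p; set cs2 := map cv (belast u p) ++ pairmap ce u p.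
have out_cover : [set y | e x y] \subset [set y in rb_ball u i.+1 | e x y]
    :|: [set y | predT y && (cv y \in cs1)] :|: [set y | e x y && (ce x y \in cs2)].
  apply/subsetP => y; rewrite inE => exy.
  move: (rb_ball_out_neighbour rbp le_pi exy); rewrite !inE exy.
  by case/or3P => ->; rewrite ?orbT.
have [ce_inj _ _ _] := col_proper.
have card_cs1 := card_mem_seq_injective (P := predT) cs1 (in2W cv_inj).
have card_cs2 : (#|[set y | e x y && (ce x y \in cs2)]| <= size cs2)%N.
  apply: card_mem_seq_injective => y z exy exz ce_yz.
  by case: (eqVneq y z) => // /(ce_inj _ _ _ exy exz); rewrite ce_yz eqxx.
move: card_cs1 card_cs2 (subset_leq_card out_cover).
rewrite /outdeg /outdeg_in !size_cat size_map size_belast size_pairmap.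
have := (leq_card_setU [set y in rb_ball u i.+1 | e x y]
  [set y | predT y && (cv y \in cs1)]).1.
have := (leq_card_setU ([set y in rb_ball u i.+1 | e x y]
  :|: [set y | predT y && (cv y \in cs1)]) [set y | e x y && (ce x y \in cs2)]).1.
lia.
Qed.

Lemma exists_thin_rb_shell u m : (0 < m)%N -> exists2 i, (i < m)%N &
  (2 * m * (#|rb_ball u i.+1 :\: rb_ball u i| + 3 * i) <= 2 * #|V| + 3 * (m * m.-1))%N.
Proof.
move=> m_gt0; have [i lt_im le_avg] := exists_le_average
  (fun i => #|rb_ball u i.+1 :\: rb_ball u i| + 3 * i)%N m_gt0.
exists i => //; rewrite -mulnA; apply: leq_trans (leq_mul (leqnn 2) le_avg) _.
rewrite big_split /= -big_distrr /= bin2_sum mulnDr.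
apply: leq_add; first by rewrite leq_mul2l (leq_trans (sum_card_rb_shells u m)) ?max_card.
by rewrite mulnCA leq_mul2l bin2 mul2n halfK leq_subr orbT.
Qed.
End RainbowBall.

Local Open Scope ring_scope.

Lemma exists_nat_floor (R : realFieldType) (t : R) (k : nat) :
  0 <= t -> t < k%:R -> exists M : nat, M%:R <= t < M.+1%:R.
Proof.
move=> t_ge0; elim: k => [|k IHk] t_lt; first by have := le_lt_trans t_ge0 t_lt; rewrite ltxx.
by case: (ltP t k%:R) => [/IHk // | le_kt]; exists k; rewrite le_kt.
Qed.

Lemma thin_shell_le_eps (R : realFieldType) (eps : R) (n M F : nat) :
  0 < eps -> 2 / eps ^+ 2 <= n%:R -> M%:R <= eps^-1 -> eps^-1 < M.+1%:R ->
  (2 * M.+1 * F <= 2 * n + 3 * (M.+1 * M))%N -> F%:R <= 2 * eps * n%:R.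
Proof.
move=> eps_gt0; rewrite -exprVn; set t := eps^-1 => large le_Mt lt_tM.
rewrite -(ler_nat R) !natrM natrD !natrM -addn1 natrD => thin.
have t_gt0 : 0 < t by rewrite invr_gt0.
have t_eps : t * eps = 1 by rewrite mulVf ?gt_eqF.
have M_ge0 := ler0n R M; have F_ge0 := ler0n R F; have n_ge0 := ler0n R n.
(* 2m tF <= 2nt + 3mMt <= 2nm + 3mt^2 <= 4nm, with m = M + 1. *)
have tF_le : t * F%:R <= 2 * n%:R.
  have nt_le := ler_wpM2l n_ge0 (ltW lt_tM).
  rewrite -(ler_pM2l (_ : 0 < 2 * (M%:R + 1))); last by lra.
  nra.
have := ler_wpM2l (ltW eps_gt0) tF_le.
rewrite mulrA (mulrC eps t) t_eps mul1r => ?; lra.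
Qed.

Theorem mainTheorem9 (R : realFieldType) (V : finType) (C : eqType)
  (e : rel V) (cv : V -> C) (ce : V -> V -> C) (eps : R) :
  0 < eps ->
  loopless e ->
  proper_total_colouring e cv ce ->
  rainbow_vertex_set cv ->
  2 / eps ^+ 2 <= (#|V|)%:R ->
  forall (v : V) (delta : nat),
    min_outdeg_ball e cv ce v eps^-1 delta ->
    exists N : {set V},
      [/\ N != set0,
          (forall u, u \in N -> rb_dist_le e cv ce v u eps^-1)
        & (forall x, x \in N ->
             delta%:R - 2 * eps * (#|V|)%:R <= (outdeg_in e N x)%:R)].
Proof.
move=> eps_gt0 _ col_proper cv_inj large v delta [_ min_delta].
have t_gt0 : 0 < eps^-1 by rewrite invr_gt0.
have t_lt : eps^-1 < #|V|.+1%:R by rewrite -exprVn in large; rewrite -addn1 natrD; nra.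
have [M /andP [le_Mt lt_tM]] := exists_nat_floor (ltW t_gt0) t_lt.
have [i le_iM thin] := exists_thin_rb_shell e cv ce v (ltn0Sn M).
have ball_dist u : u \in rb_ball e cv ce v i -> rb_dist_le e cv ce v u eps^-1.
  case/rb_ballP => p rbp le_pi; exists p; split => //.
  by apply: le_trans le_Mt; rewrite ler_nat (leq_trans le_pi).
exists (rb_ball e cv ce v i); split => // [|x x_ball].
  by apply/set0Pn; exists v; apply: center_rb_ball.
have := leq_trans (outdeg_le_rb_ball col_proper cv_inj x_ball)
  (leq_add (outdeg_in_le_setD e (rb_ball e cv ce v i) _ x) (leqnn _)).
rewrite -addnA => /(leq_trans (min_delta x (ball_dist x x_ball))).
rewrite -(ler_nat R) natrD => delta_le.
have := thin_shell_le_eps eps_gt0 large le_Mt lt_tM thin.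
lra.
Qed.
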